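(* Let $(X,d)$ be a complete metric space and $T\colon X\to X$ a mapping for which there exists $k<\kappa(X)$ with $$d(T^nx,T^ny)\le k\,D(x,o(y))$$ for all $n\in\mathbb N$ and all $(x,y)\in X\times X$ with $D(x,o(y))\le D(x,o(x))$. If some orbit of $T$ is bounded, then $T$ has a fixed point.
   Context: The orbit of $x$ under $T$ is $o(x)=\{x\}\cup\{T^nx:n\in\mathbb N\}$; for nonempty $C\subseteq X$, $D(x,C)=\sup\{d(x,y):y\in C\}$. $B(x,r)$ denotes the closed ball. For $c\ge1$, balls in $X$ are $c$-regular if for every $k'<c$ there are $\mu,\alpha\in(0,1)$ such that for all $x,y\in X$ and $r>0$ with $d(x,y)\ge(1-\mu)r$ there exists $z\in X$ with $B(x,(1+\mu)r)\cap B(y,k'(1+\mu)r)\subseteq B(z,\alpha r)$. The Lifschitz characteristic is $\kappa(X)=\sup\{c\ge1:\text{balls in }X\text{ are }c\text{-regular}\}$. *)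

From Stdlib Require Import Reals.
From Coquelicot Require Import Coquelicot.
Open Scope R_scope.

Section MetricDefs.
Context {X : Type} (d : X -> X -> R).

Definition is_metric : Prop :=
  (forall x y, 0 <= d x y) /\
  (forall x y, d x y = 0 <-> x = y) /\
  (forall x y, d x y = d y x) /\
  (forall x y z, d x z <= d x y + d y z).

Definition cauchy_seq (u : nat -> X) : Prop :=
  forall eps, 0 < eps -> exists N, forall m n, (N <= m)%nat -> (N <= n)%nat -> d (u m) (u n) < eps.

Definition seq_converges_to (u : nat -> X) (l : X) : Prop :=
  forall eps, 0 < eps -> exists N, forall n, (N <= n)%nat -> d (u n) l < eps.

Definition complete_metric : Prop :=
  forall u : nat -> X, cauchy_seq u -> exists l, seq_converges_to u l.

Definition cball (x : X) (r : R) : X -> Prop := fun y => d x y <= r.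

Definition balls_regular (c : R) : Prop :=
  forall k', k' < c ->
    exists mu alpha, 0 < mu < 1 /\ 0 < alpha < 1 /\
      forall x y r, 0 < r -> (1 - mu) * r <= d x y ->
        exists z, forall w, cball x ((1 + mu) * r) w -> cball y (k' * (1 + mu) * r) w ->
                            cball z (alpha * r) w.

Definition lifschitz_char : Rbar :=
  Lub_Rbar (fun c => 1 <= c /\ balls_regular c).

Definition Dsup (x : X) (C : X -> Prop) : Rbar :=
  Lub_Rbar (fun t => exists y, C y /\ t = d x y).

End MetricDefs.

Definition orbit {X : Type} (T : X -> X) (x : X) : X -> Prop :=
  fun y => y = x \/ exists n : nat, (1 <= n)%nat /\ y = Nat.iter n T x.

(* "a <= k * D" where D may be +oo; the inequality is vacuous when D = +oo *)
Definition le_mul_Rbar (a k : R) (D : Rbar) : Prop :=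
  match D with
  | Finite r => a <= k * r
  | _ => True
  end.

Definition bounded_set {X : Type} (d : X -> X -> R) (C : X -> Prop) : Prop :=
  exists M : R, forall y z, C y -> C z -> d y z <= M.

(** If the orbit of [p] lies in the ball of radius [R] about [p], there is a
    point [q] within [3 R] of [p] whose orbit lies in the ball of radius
    [beta R] about [q], where [beta = max alpha (1 - mu) < 1] comes from the
    [K]-regularity of balls.  To find [q], let [psi] be the infimum of the radii
    of balls about points [y] containing an orbit [o(T^m p)] with
    [D(y, o(T^m p)) <= D(y, o(y))], and take [y] nearly optimal.  Either the
    orbit of [y] stays within [(1 - mu) psi] of [y], or some [T^m y] is far
    from [y]; then the balls about [y] and [T^m y] both contain the tail
    [o(T^m (T^m0 p))] (the second one by the contraction hypothesis), so
    regularity puts that tail in a ball of radius [alpha psi] about some [z],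
    and minimality of [psi] forces [o(z)] into the same ball.  Iterating gives
    a Cauchy sequence whose limit [z] has orbits of other points arbitrarily
    close to it, and the contraction inequality then forces [T z = z]. *)

From Stdlib Require Import Reals Lra Lia Classical IndefiniteDescription ChoiceFacts.
From Coquelicot Require Import Coquelicot.
Open Scope R_scope.

Lemma nonneg_inf_exists (S : R -> Prop) :
  (exists a, S a) -> (forall a, S a -> 0 <= a) ->
  exists psi, 0 <= psi /\ (forall a, S a -> psi <= a) /\
              (forall eps, 0 < eps -> exists a, S a /\ a < psi + eps).
Proof.
  intros Hne Hpos.
  set (E := fun t => S (- t)).
  assert (HE0 : is_upper_bound E 0).
  { intros t Ht. specialize (Hpos _ Ht). lra. }
  assert (HEne : exists t, E t).
  { destruct Hne as [a Ha]. exists (- a). unfold E. now rewrite Ropp_involutive. }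
  destruct (completeness E (ex_intro _ 0 HE0) HEne) as [L [HLub HLleast]].
  exists (- L). split; [|split].
  - specialize (HLleast 0 HE0). lra.
  - intros a Ha. assert (HEa : E (- a)) by (unfold E; now rewrite Ropp_involutive).
    specialize (HLub _ HEa). lra.
  - intros eps Heps. apply NNPP. intros Hno.
    assert (Hub : is_upper_bound E (L - eps)).
    { intros t Ht. apply Rnot_lt_le. intros Hlt. apply Hno.
      exists (- t). split; [exact Ht | lra]. }
    specialize (HLleast _ Hub). lra.
Qed.

Lemma dependent_choice_on {A : Type} (P : A -> Prop) (Rel : A -> A -> Prop) :
  (forall a, P a -> exists b, P b /\ Rel a b) -> forall a0, P a0 ->
  exists f : nat -> A, f 0%nat = a0 /\ forall n, P (f n) /\ Rel (f n) (f (S n)).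
Proof.
  intros Hstep a0 Ha0.
  destruct (functional_choice_imp_functional_dependent_choice functional_choice
              (fun a b => P a -> P b /\ Rel a b)) with (x0 := a0) as [f [Hf0 Hf]].
  { intros a. destruct (classic (P a)) as [Ha | Ha].
    - destruct (Hstep a Ha) as [b Hb]. now exists b.
    - exists a. now intros. }
  exists f. split; [exact Hf0|].
  assert (HP : forall n, P (f n)).
  { induction n as [|n IH]; [now rewrite Hf0 | now apply Hf]. }
  intros n. split; [apply HP | apply Hf, HP].
Qed.

Lemma exists_regular_above (X : Type) (d : X -> X -> R) (k : R) :
  Rbar_lt k (lifschitz_char d) -> exists c, 1 <= c /\ balls_regular d c /\ k < c.
Proof.
  intros Hk. apply NNPP. intros Hno.
  assert (Hub : is_ub_Rbar (fun c => 1 <= c /\ balls_regular d c) k).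
  { intros c Hc. simpl. apply Rnot_lt_le. intros Hlt. apply Hno. now exists c. }
  destruct (Lub_Rbar_correct (fun c => 1 <= c /\ balls_regular d c)) as [_ Hleast].
  exact (Rbar_lt_not_le _ _ Hk (Hleast _ Hub)).
Qed.

Section Metric.
Context {X : Type} (d : X -> X -> R).
Hypothesis Hmetric : is_metric d.

Lemma dist_ge0 x y : 0 <= d x y.
Proof. apply Hmetric. Qed.

Lemma dist_self x : d x x = 0.
Proof. now apply Hmetric. Qed.

Lemma dist_sym x y : d x y = d y x.
Proof. apply Hmetric. Qed.

Lemma dist_triangle x y z : d x z <= d x y + d y z.
Proof. apply Hmetric. Qed.

Lemma geometric_steps_cauchy (u : nat -> X) (C beta : R) :
  0 <= beta < 1 -> (forall n, d (u n) (u (S n)) <= C * beta ^ n) -> cauchy_seq d u.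
Proof.
  intros Hbeta Hstep.
  assert (Htail : forall m j,
             d (u m) (u (m + j)%nat) <= C * (beta ^ m - beta ^ (m + j)) / (1 - beta)).
  { intros m j. induction j as [|j IH].
    - rewrite Nat.add_0_r, dist_self, Rminus_diag. lra.
    - rewrite Nat.add_succ_r.
      pose proof (dist_triangle (u m) (u (m + j)%nat) (u (S (m + j)))).
      pose proof (Hstep (m + j)%nat).
      replace (C * (beta ^ m - beta ^ S (m + j)) / (1 - beta))
        with (C * (beta ^ m - beta ^ (m + j)) / (1 - beta) + C * beta ^ (m + j))
        by (simpl; field; lra).
      lra. }
  assert (HC : 0 <= C).
  { pose proof (Hstep 0%nat). pose proof (dist_ge0 (u 0%nat) (u 1%nat)). simpl in *. lra. }
  assert (Htail' : forall m j, d (u m) (u (m + j)%nat) <= C * beta ^ m / (1 - beta)).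
  { intros m j. eapply Rle_trans; [apply Htail|].
    apply Rmult_le_compat_r; [apply Rlt_le, Rinv_0_lt_compat; lra|].
    pose proof (pow_le beta (m + j) (proj1 Hbeta)). nra. }
  intros eps Heps.
  destruct (pow_lt_1_zero beta ltac:(rewrite Rabs_pos_eq; lra) (eps * (1 - beta) / (C + 1)))
    as [N HN].
  { apply Rdiv_lt_0_compat; nra. }
  assert (Hfar : forall m j, (N <= m)%nat -> d (u m) (u (m + j)%nat) < eps).
  { intros m j Hm. eapply Rle_lt_trans; [apply Htail'|].
    specialize (HN m Hm). rewrite Rabs_pos_eq in HN by (apply pow_le; lra).
    apply (Rmult_lt_reg_r (1 - beta)); [lra|].
    replace (C * beta ^ m / (1 - beta) * (1 - beta)) with (C * beta ^ m) by (field; lra).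
    apply (Rmult_lt_compat_r (C + 1)) in HN; [|lra].
    replace (eps * (1 - beta) / (C + 1) * (C + 1)) with (eps * (1 - beta)) in HN by (field; lra).
    pose proof (pow_le beta m (proj1 Hbeta)). nra. }
  exists N. intros m n Hm Hn. destruct (Nat.le_ge_cases m n) as [Hmn | Hnm].
  - replace n with (m + (n - m))%nat by lia. now apply Hfar.
  - rewrite dist_sym. replace m with (n + (m - n))%nat by lia. now apply Hfar.
Qed.

End Metric.

Section Orbits.
Context {X : Type} (d : X -> X -> R) (T : X -> X).

Definition orbit_sub_cball (x y : X) (a : R) : Prop :=
  forall n, d x (Nat.iter n T y) <= a.

Definition admissible (x y : X) : Prop :=
  Rbar_le (Dsup d x (orbit T y)) (Dsup d x (orbit T x)).

Lemma orbit_iter x y : orbit T x y <-> exists n, y = Nat.iter n T x.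
Proof.
  split.
  - intros [-> | [n [_ ->]]]; [now exists 0%nat | now exists n].
  - intros [[|n] ->]; [now left | right].
    exists (S n). split; [lia | reflexivity].
Qed.

Lemma Dsup_orbit_ge x y n : Rbar_le (d x (Nat.iter n T y)) (Dsup d x (orbit T y)).
Proof.
  apply (proj1 (Lub_Rbar_correct _)).
  exists (Nat.iter n T y). split; [apply orbit_iter; now exists n | reflexivity].
Qed.

Lemma Dsup_orbit_le x y (a : R) : orbit_sub_cball x y a -> Rbar_le (Dsup d x (orbit T y)) a.
Proof.
  intros Hxy. apply (proj2 (Lub_Rbar_correct _)).
  intros t [w [Hw ->]]. apply orbit_iter in Hw as [n ->]. apply Hxy.
Qed.

Lemma orbit_sub_cball_Dsup x y (a : R) :
  Rbar_le (Dsup d x (orbit T y)) a -> orbit_sub_cball x y a.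
Proof. intros H n. exact (Rbar_le_trans _ _ _ (Dsup_orbit_ge x y n) H). Qed.

Lemma orbit_sub_cball_weaken x y a b :
  a <= b -> orbit_sub_cball x y a -> orbit_sub_cball x y b.
Proof. intros Hab Hxy n. specialize (Hxy n). lra. Qed.

Lemma orbit_sub_cball_iter x y a j :
  orbit_sub_cball x y a -> orbit_sub_cball x (Nat.iter j T y) a.
Proof. intros Hxy n. rewrite <- Nat.iter_add. apply Hxy. Qed.

Lemma admissible_iter x y j : admissible x y -> admissible x (Nat.iter j T y).
Proof.
  intros Hxy. eapply Rbar_le_trans; [|exact Hxy].
  apply (proj2 (Lub_Rbar_correct _)).
  intros t [w [Hw ->]]. apply orbit_iter in Hw as [n ->].
  rewrite <- Nat.iter_add. apply Dsup_orbit_ge.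
Qed.

Lemma not_admissible_orbit_sub_cball x y b :
  ~ admissible x y -> orbit_sub_cball x y b -> orbit_sub_cball x x b.
Proof.
  intros Hna Hxy. apply orbit_sub_cball_Dsup.
  apply Rbar_not_le_lt, Rbar_lt_le in Hna. eapply Rbar_le_trans; [exact Hna|].
  now apply Dsup_orbit_le.
Qed.

Definition admissible_orbit_radius (p : X) (a : R) : Prop :=
  exists y m, admissible y (Nat.iter m T p) /\ orbit_sub_cball y (Nat.iter m T p) a.

Lemma shrinking_centers (beta : R) (x0 : X) (M : R) :
  0 <= beta ->
  (forall p R, orbit_sub_cball p p R ->
     exists q Rq, orbit_sub_cball q q Rq /\ Rq <= beta * R /\ d p q <= 3 * R) ->
  orbit_sub_cball x0 x0 M ->
  exists (u : nat -> X) (r : nat -> R), forall n,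
    orbit_sub_cball (u n) (u n) (r n) /\ r n <= M * beta ^ n /\
    d (u n) (u (S n)) <= 3 * M * beta ^ n.
Proof.
  intros Hbeta Hstep Hx0.
  destruct (dependent_choice_on (fun s => orbit_sub_cball (fst s) (fst s) (snd s))
              (fun s s' => snd s' <= beta * snd s /\ d (fst s) (fst s') <= 3 * snd s))
    with (a0 := (x0, M)) as [s [Hs0 Hs]]; [|exact Hx0|].
  { intros [p R] Hp. destruct (Hstep p R Hp) as [q [Rq Hq]]. now exists (q, Rq). }
  assert (Hr : forall n, snd (s n) <= M * beta ^ n).
  { induction n as [|n IH]; [rewrite Hs0; simpl; lra|].
    destruct (Hs n) as [_ [Hstep_n _]]. simpl. nra. }
  exists (fun n => fst (s n)), (fun n => snd (s n)). intros n.
  destruct (Hs n) as [Hn [_ Hdist]]. specialize (Hr n).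
  split; [exact Hn | split; [exact Hr | lra]].
Qed.

Hypothesis Hmetric : is_metric d.

Lemma orbit_sub_cball_ge0 x y a : orbit_sub_cball x y a -> 0 <= a.
Proof.
  intros Hxy. specialize (Hxy 0%nat). simpl in Hxy.
  pose proof (dist_ge0 d Hmetric x y). lra.
Qed.

Lemma orbit_sub_cball_shift x y z a :
  orbit_sub_cball x y a -> orbit_sub_cball z y (d z x + a).
Proof.
  intros Hxy n. pose proof (dist_triangle d Hmetric z x (Nat.iter n T y)).
  pose proof (Hxy n). lra.
Qed.

Lemma dist_center_le p q R b m :
  orbit_sub_cball p p R -> orbit_sub_cball q (Nat.iter m T p) b -> d p q <= R + b.
Proof.
  intros Hp Hq. pose proof (dist_triangle d Hmetric p (Nat.iter m T p) q).
  pose proof (Hp m). specialize (Hq 0%nat). simpl in Hq.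
  rewrite (dist_sym d Hmetric q) in Hq. lra.
Qed.

Section Contraction.
Variables k K : R.
Hypothesis HkK : k <= K.
Hypothesis HK : 0 <= K.
Hypothesis Hlip : forall x y : X, admissible x y ->
  forall n : nat, (1 <= n)%nat ->
    le_mul_Rbar (d (Nat.iter n T x) (Nat.iter n T y)) k (Dsup d x (orbit T y)).

Lemma contraction_le x y a n :
  admissible x y -> orbit_sub_cball x y a -> (1 <= n)%nat ->
  d (Nat.iter n T x) (Nat.iter n T y) <= K * a.
Proof.
  intros Hadm Hxy Hn. specialize (Hlip x y Hadm n Hn).
  pose proof (Dsup_orbit_le x y a Hxy) as Hle.
  pose proof (Dsup_orbit_ge x y 0) as Hge.
  destruct (Dsup d x (orbit T y)) as [r | |]; simpl in *; try contradiction.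
  pose proof (dist_ge0 d Hmetric x y). nra.
Qed.

Lemma orbit_sub_cball_contract x y a :
  admissible x y -> orbit_sub_cball x y a -> orbit_sub_cball x x ((1 + K) * a).
Proof.
  intros Hadm Hxy [|n]; simpl.
  - rewrite (dist_self d Hmetric). pose proof (orbit_sub_cball_ge0 x y a Hxy). nra.
  - pose proof (dist_triangle d Hmetric x (Nat.iter (S n) T y) (Nat.iter (S n) T x)).
    pose proof (contraction_le x y a (S n) Hadm Hxy ltac:(lia)).
    rewrite (dist_sym d Hmetric (Nat.iter (S n) T y)) in *. simpl in *.
    pose proof (Hxy (S n)). simpl in *. lra.
Qed.

Lemma fixed_of_near_orbits z :
  (forall eps, 0 < eps -> exists y, orbit_sub_cball z y eps) -> T z = z.
Proof.
  intros Hnear. apply NNPP. intros Hne.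
  set (delta := d z (T z)).
  assert (Hdelta : 0 < delta).
  { destruct (Rle_lt_or_eq_dec 0 delta (dist_ge0 d Hmetric z (T z))) as [? | H0]; [easy|].
    exfalso. apply Hne. symmetry. now apply Hmetric. }
  destruct (Hnear (delta / (2 * (1 + K)))) as [y Hy].
  { apply Rdiv_lt_0_compat; lra. }
  set (eps := delta / (2 * (1 + K))) in Hy.
  assert (Heps : (1 + K) * eps * 2 = delta) by (unfold eps; field; lra).
  assert (Hadm : admissible z y).
  { eapply Rbar_le_trans; [now apply Dsup_orbit_le|].
    eapply Rbar_le_trans; [|apply (Dsup_orbit_ge z z 1)]. simpl. fold delta. nra. }
  pose proof (contraction_le z y eps 1 Hadm Hy (le_n 1)) as HT. simpl in HT.
  pose proof (Hy 1%nat) as Hy1. simpl in Hy1.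
  pose proof (dist_triangle d Hmetric z (T y) (T z)) as Htri.
  rewrite (dist_sym d Hmetric (T y)) in Htri. fold delta in Htri. nra.
Qed.

Section Regularity.
Variables mu alpha : R.
Hypothesis Hmu : 0 < mu < 1.
Hypothesis Halpha : 0 < alpha < 1.
Hypothesis Hreg : forall x y r, 0 < r -> (1 - mu) * r <= d x y ->
  exists z, forall w, cball d x ((1 + mu) * r) w -> cball d y (K * (1 + mu) * r) w ->
                      cball d z (alpha * r) w.

Lemma regular_center_for_orbit y x r m :
  0 < r -> admissible y x -> orbit_sub_cball y x ((1 + mu) * r) -> (1 <= m)%nat ->
  (1 - mu) * r <= d y (Nat.iter m T y) ->
  exists z, orbit_sub_cball z (Nat.iter m T x) (alpha * r).
Proof.
  intros Hr Hadm Hyx Hm Hfar.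
  destruct (Hreg y (Nat.iter m T y) r Hr Hfar) as [z Hz]. exists z. intros j.
  apply Hz; unfold cball.
  - rewrite <- Nat.iter_add. apply Hyx.
  - rewrite <- Nat.iter_add, Nat.add_comm, Nat.iter_add, Rmult_assoc.
    apply contraction_le; [now apply admissible_iter | now apply orbit_sub_cball_iter | exact Hm].
Qed.

Lemma shrink_at_positive_inf p R psi :
  orbit_sub_cball p p R -> 0 < psi ->
  (forall a, admissible_orbit_radius p a -> psi <= a) ->
  admissible_orbit_radius p ((1 + mu) * psi) ->
  exists q Rq, orbit_sub_cball q q Rq /\ Rq <= Rmax alpha (1 - mu) * psi /\
               d p q <= R + (1 + mu) * psi.
Proof.
  intros Hp Hpsi Hlow [y [m0 [Hadm Hy]]].
  pose proof (Rmax_l alpha (1 - mu)). pose proof (Rmax_r alpha (1 - mu)).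
  destruct (classic (exists m, (1 <= m)%nat /\ (1 - mu) * psi <= d y (Nat.iter m T y)))
    as [[m [Hm Hfar]] | Hflat].
  - destruct (regular_center_for_orbit y _ psi m Hpsi Hadm Hy Hm Hfar) as [z Hz].
    rewrite <- Nat.iter_add in Hz.
    (* an admissible pair of radius [alpha psi < psi] would contradict minimality *)
    destruct (classic (admissible z (Nat.iter (m + m0) T p))) as [Hadz | Hnadz].
    + exfalso. assert (psi <= alpha * psi) by (apply Hlow; now exists z, (m + m0)%nat). nra.
    + exists z, (alpha * psi). split; [|split].
      * exact (not_admissible_orbit_sub_cball _ _ _ Hnadz Hz).
      * nra.
      * pose proof (dist_center_le p z R _ _ Hp Hz). nra.
  - exists y, ((1 - mu) * psi). split; [|split].
    + intros [|n].
      * simpl. rewrite (dist_self d Hmetric). nra.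
      * apply Rnot_lt_le. intros Hlt. apply Hflat. exists (S n). split; [lia | lra].
    + nra.
    + exact (dist_center_le p y R _ _ Hp Hy).
Qed.

Lemma orbit_radius_shrinks p R :
  orbit_sub_cball p p R ->
  exists q Rq, orbit_sub_cball q q Rq /\ Rq <= Rmax alpha (1 - mu) * R /\ d p q <= 3 * R.
Proof.
  intros Hp. set (beta := Rmax alpha (1 - mu)).
  assert (Hbeta_alpha : alpha <= beta) by apply Rmax_l.
  assert (Hbeta1 : beta < 1) by (apply Rmax_lub_lt; lra).
  assert (HR : 0 <= R) by exact (orbit_sub_cball_ge0 p p R Hp).
  assert (HpR : admissible_orbit_radius p R).
  { exists p, 0%nat. split; [apply Rbar_le_refl | exact Hp]. }
  destruct (Req_dec R 0) as [HR0 | HR0].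
  { exists p, R. rewrite HR0, (dist_self d Hmetric) in *. repeat split; [exact Hp | lra | lra]. }
  destruct (nonneg_inf_exists (admissible_orbit_radius p)) as [psi [Hpsi0 [Hlow Hnear]]].
  { now exists R. }
  { intros a [y [m [_ Hy]]]. exact (orbit_sub_cball_ge0 _ _ _ Hy). }
  specialize (Hlow R HpR) as HpsiR.
  destruct (Req_dec psi 0) as [Hpsi | Hpsi].
  - destruct (Hnear (beta * R / (1 + K))) as [a [[y [m [Hadm Hy]]] Ha]].
    { apply Rdiv_lt_0_compat; nra. }
    rewrite Hpsi, Rplus_0_l in Ha.
    assert (Ha' : (1 + K) * a <= beta * R).
    { apply (Rmult_lt_compat_l (1 + K)), Rlt_le in Ha; [|lra].
      replace ((1 + K) * (beta * R / (1 + K))) with (beta * R) in Ha by (field; lra). exact Ha. }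
    exists y, ((1 + K) * a). split; [|split].
    + exact (orbit_sub_cball_contract y _ a Hadm Hy).
    + exact Ha'.
    + pose proof (dist_center_le p y R a m Hp Hy). pose proof (orbit_sub_cball_ge0 _ _ _ Hy).
      assert (a <= (1 + K) * a) by nra. nra.
  - destruct (Hnear (mu * psi)) as [a [[y [m [Hadm Hy]]] Ha]]; [nra|].
    destruct (shrink_at_positive_inf p R psi Hp ltac:(lra) Hlow) as [q [Rq [Hq [HRq Hpq]]]].
    { exists y, m. split; [exact Hadm | apply (orbit_sub_cball_weaken _ _ a); [lra | exact Hy]]. }
    exists q, Rq. split; [exact Hq | split].
    + apply (Rle_trans _ _ _ HRq). apply Rmult_le_compat_l; lra.
    + assert ((1 + mu) * psi <= 2 * R) by nra. lra.
Qed.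

End Regularity.
End Contraction.

Lemma orbits_near_limit (u : nat -> X) (r : nat -> R) (z : X) (C beta : R) :
  0 <= beta < 1 -> seq_converges_to d u z ->
  (forall n, orbit_sub_cball (u n) (u n) (r n)) -> (forall n, r n <= C * beta ^ n) ->
  forall eps, 0 < eps -> exists y, orbit_sub_cball z y eps.
Proof.
  intros Hbeta Hz Hu Hr eps Heps.
  assert (HC : 0 <= C).
  { pose proof (Hr 0%nat). pose proof (orbit_sub_cball_ge0 _ _ _ (Hu 0%nat)). simpl in *. lra. }
  destruct (Hz (eps / 2)) as [N1 HN1]; [lra|].
  destruct (pow_lt_1_zero beta ltac:(rewrite Rabs_pos_eq; lra) (eps / (2 * (C + 1)))) as [N2 HN2].
  { apply Rdiv_lt_0_compat; lra. }
  set (j := Nat.max N1 N2).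
  specialize (HN1 j ltac:(lia)). specialize (HN2 j ltac:(lia)).
  rewrite Rabs_pos_eq in HN2 by (apply pow_le; lra).
  assert (Hrj : r j < eps / 2).
  { apply (Rmult_lt_compat_l (C + 1)) in HN2; [|lra].
    replace ((C + 1) * (eps / (2 * (C + 1)))) with (eps / 2) in HN2 by (field; lra).
    pose proof (Hr j). pose proof (pow_le beta j (proj1 Hbeta)). nra. }
  exists (u j). apply (orbit_sub_cball_weaken _ _ (d z (u j) + r j)).
  - rewrite (dist_sym d Hmetric). lra.
  - exact (orbit_sub_cball_shift _ _ _ _ (Hu j)).
Qed.

End Orbits.

Theorem corollary4p5 (X : Type) (d : X -> X -> R) (T : X -> X)
  (Hmetric : is_metric d) (Hcomplete : complete_metric d)
  (k : R) (Hk : Rbar_lt (Finite k) (lifschitz_char d))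
  (Hlip : forall x y : X,
      Rbar_le (Dsup d x (orbit T y)) (Dsup d x (orbit T x)) ->
      forall n : nat, (1 <= n)%nat ->
        le_mul_Rbar (d (Nat.iter n T x) (Nat.iter n T y)) k (Dsup d x (orbit T y)))
  (Hbdd : exists x0 : X, bounded_set d (orbit T x0)) :
  exists z : X, T z = z.
Proof.
  destruct (exists_regular_above X d k Hk) as [c [Hc1 [Hreg Hkc]]].
  set (K := Rmax k 0).
  assert (HkK : k <= K) by apply Rmax_l.
  assert (HK : 0 <= K) by apply Rmax_r.
  destruct (Hreg K ltac:(apply Rmax_lub_lt; lra)) as [mu [alpha [Hmu [Halpha Hreg']]]].
  set (beta := Rmax alpha (1 - mu)).
  assert (Hbeta : 0 <= beta < 1) by (split; [apply Rmax_Rle | apply Rmax_lub_lt]; lra).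
  destruct Hbdd as [x0 [M HM]].
  assert (Hx0 : orbit_sub_cball d T x0 x0 M).
  { intros n. apply HM; apply orbit_iter; [now exists 0%nat | now exists n]. }
  destruct (shrinking_centers d T beta x0 M (proj1 Hbeta)
              (orbit_radius_shrinks d T Hmetric k K HkK HK Hlip mu alpha Hmu Halpha Hreg') Hx0)
    as [u [r Hur]].
  assert (Hcauchy : cauchy_seq d u).
  { apply (geometric_steps_cauchy d Hmetric u (3 * M) beta Hbeta). apply Hur. }
  destruct (Hcomplete u Hcauchy) as [z Hz].
  exists z. apply (fixed_of_near_orbits d T Hmetric k K HkK HK Hlip z).
  apply (orbits_near_limit d T Hmetric u r z M beta Hbeta Hz); apply Hur.
Qed.
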